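(* Let $\mathcal{X}\subset\mathbb{R}^n$ be closed convex, let $\mathcal{S}$ be a set, and for each $s$ let $f(\cdot;s):\mathbb{R}^n\to\mathbb{R}$ be convex and subdifferentiable on $\mathcal{X}$. For each $x\in\mathcal{X}$ and $s\in\mathcal{S}$ let $f_x(\cdot;s)$ satisfy (C.i) $y\mapsto f_x(y;s)$ is convex and subdifferentiable on $\mathcal{X}$, and (C.ii) $f_x(x;s)=f(x;s)$ and $f_x(y;s)\le f(y;s)$ for all $y$. Given $x_k\in\mathcal{X}$, $S_k\in\mathcal{S}$, $\alpha_k>0$, let $x_{k+1}=\arg\min_{x\in\mathcal{X}}\{f_{x_k}(x;S_k)+\frac{1}{2\alpha_k}\|x-x_k\|_2^2\}$. Then $\|x_k-x_{k+1}\|_2\le\alpha_k\|f'(x_k;S_k)\|_2$ for some $f'(x_k;S_k)\in\partial f(x_k;S_k)$. *)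

(* R : realType, R^n represented as row vectors 'rV[R]_n,
   with the (product = Euclidean) topology from MathComp-Analysis. *)
From HB Require Import structures.
From mathcomp Require Import all_boot all_order all_algebra.
From mathcomp Require Import all_classical all_reals all_analysis.
Set Implicit Arguments. Unset Strict Implicit. Unset Printing Implicit Defensive.
Import Order.TTheory GRing.Theory Num.Theory numFieldNormedType.Exports.
Local Open Scope ring_scope.
Local Open Scope classical_set_scope.

Definition dotv {R : realType} {n : nat} (x y : 'rV[R]_n) : R :=
  \sum_(i < n) x ord0 i * y ord0 i.
Definition norm2 {R : realType} {n : nat} (x : 'rV[R]_n) : R :=
  Num.sqrt (dotv x x).

Definition convex_fun_on {R : realType} {n : nat} (D : set 'rV[R]_n)
  (f : 'rV[R]_n -> R) : Prop :=
  forall x y (t : R), D x -> D y -> 0 <= t -> t <= 1 ->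
    f (t *: x + (1 - t) *: y) <= t * f x + (1 - t) * f y.

Definition subgradient {R : realType} {n : nat} (f : 'rV[R]_n -> R)
  (x g : 'rV[R]_n) : Prop :=
  forall y, f x + dotv g (y - x) <= f y.

Definition subdifferentiable_on {R : realType} {n : nat} (f : 'rV[R]_n -> R)
  (X : set 'rV[R]_n) : Prop :=
  forall x, X x -> exists g, subgradient f x g.

Definition is_argmin {R : realType} {n : nat} (F : 'rV[R]_n -> R)
  (X : set 'rV[R]_n) (z : 'rV[R]_n) : Prop :=
  X z /\ forall y, X y -> F z <= F y.

From HB Require Import structures.
From mathcomp Require Import all_boot all_order all_algebra.
From mathcomp Require Import all_classical all_reals all_analysis.
From mathcomp Require Import ring lra.
Import Order.TTheory GRing.Theory Num.Theory numFieldNormedType.Exports.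
Local Open Scope ring_scope.
Local Open Scope classical_set_scope.

(* Write phi for the surrogate f_{x_k}(.; S_k) and d = x_{k+1} - x_k.  Since
   phi lies below f and touches it at x_k, a subgradient h of phi at x_k is
   also one of f.  Comparing the proximal objective at x_{k+1} with its values
   on the segment towards x_k and letting the step shrink gives the sufficient
   decrease phi(x_{k+1}) + |d|^2 / alpha <= phi(x_k); with the subgradient
   inequality this yields |d|^2 <= - alpha <h, d>, hence |d| <= alpha |h|. *)

Section EuclideanNorm.
Context {R : realType} {n : nat}.
Implicit Types a b c : 'rV[R]_n.

Lemma dotvC a b : dotv a b = dotv b a.
Proof. by apply: eq_bigr => i _; rewrite mulrC. Qed.

Lemma dotvDl a b c : dotv (a + b) c = dotv a c + dotv b c.
Proof. by rewrite /dotv -big_split; apply: eq_bigr => i _; rewrite mxE mulrDl. Qed.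

Lemma dotvDr a b c : dotv a (b + c) = dotv a b + dotv a c.
Proof. by rewrite dotvC dotvDl !(dotvC a). Qed.

Lemma dotvZl (k : R) a b : dotv (k *: a) b = k * dotv a b.
Proof. by rewrite /dotv mulr_sumr; apply: eq_bigr => i _; rewrite mxE mulrA. Qed.

Lemma dotvZr (k : R) a b : dotv a (k *: b) = k * dotv a b.
Proof. by rewrite dotvC dotvZl dotvC. Qed.

Lemma dotv_ge0 a : 0 <= dotv a a.
Proof. by apply: sumr_ge0 => i _; rewrite -expr2 sqr_ge0. Qed.

Lemma norm2_sq a : norm2 a ^+ 2 = dotv a a.
Proof. by rewrite sqr_sqrtr // dotv_ge0. Qed.

Lemma norm2Z (k : R) a : norm2 (k *: a) = `|k| * norm2 a.
Proof.
by rewrite /norm2 dotvZl dotvZr mulrA -expr2 sqrtrM ?sqr_ge0 // sqrtr_sqr.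
Qed.

Lemma norm2N a : norm2 (- a) = norm2 a.
Proof. by rewrite -scaleN1r norm2Z normrN normr1 mul1r. Qed.

Lemma norm2_le_of_dotv a b : dotv a a <= - dotv b a -> norm2 a <= norm2 b.
Proof.
move=> hab; have := dotv_ge0 (b + a).
rewrite !dotvDl !dotvDr (dotvC a b) => hba.
by rewrite ler_sqrt ?dotv_ge0 //; lra.
Qed.

End EuclideanNorm.

Lemma ler_slack_itv01 {R : realFieldType} {a b c : R} :
  0 <= b -> (forall t, 0 < t -> t <= 1 -> a <= c + t * b) -> a <= c.
Proof.
move=> b0 hab; apply/ler_addgt0Pr => e e0.
have eb0 : 0 < e + b by lra.
have t1 : e / (e + b) <= 1 by rewrite ler_pdivrMr // mul1r; lra.
apply: le_trans (hab _ (divr_gt0 e0 eb0) t1) _.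
by rewrite lerD2l mulrAC ler_pdivrMr //; nra.
Qed.

Section ProximalStep.
Context {R : realType} {n : nat}.
Implicit Types (D E : set 'rV[R]_n) (phi psi : 'rV[R]_n -> R).

Lemma convex_fun_onS {D E phi} :
  D `<=` E -> convex_fun_on E phi -> convex_fun_on D phi.
Proof. by move=> DE phicvx x y t /DE Ex /DE Ey; exact: phicvx. Qed.

Lemma subgradient_minorant phi psi (x h : 'rV[R]_n) :
  phi x = psi x -> (forall y, phi y <= psi y) ->
  subgradient phi x h -> subgradient psi x h.
Proof. by move=> phix phi_le hsub y; rewrite -phix (le_trans (hsub y)). Qed.

Lemma prox_descent {D phi} {c : R} {x z : 'rV[R]_n} :
  convex_set D -> convex_fun_on D phi -> 0 <= c -> D x ->
  is_argmin (fun y => phi y + c * norm2 (y - x) ^+ 2) D z ->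
  phi z + 2 * c * norm2 (z - x) ^+ 2 <= phi x.
Proof.
move=> Dcvx phicvx c0 Dx [Dz zmin].
set u := norm2 (z - x) ^+ 2.
have u0 : 0 <= u by exact: sqr_ge0.
suff on_segment t : 0 < t -> t <= 1 -> phi z <= phi x - 2 * c * u + t * (c * u).
  by have := ler_slack_itv01 (mulr_ge0 c0 u0) on_segment; lra.
move=> t0 t1.
have Dy : D (t *: x + (1 - t) *: z).
  by have := Dcvx x z (Itv01 (ltW t0) t1) (mem_set Dx) (mem_set Dz); rewrite inE.
have := zmin _ Dy.
have -> : t *: x + (1 - t) *: z - x = (1 - t) *: (z - x).
  by apply/rowP => i; rewrite !mxE; ring.
rewrite norm2Z ger0_norm ?subr_ge0 // exprMn -/u => zle.
have ycvx := phicvx x z t Dx Dz (ltW t0) t1.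
rewrite -(ler_pM2l t0); nra.
Qed.

Lemma prox_step_le_subgradient {D phi} {alpha : R} {x z h : 'rV[R]_n} :
  convex_set D -> convex_fun_on D phi -> 0 < alpha -> D x ->
  subgradient phi x h ->
  is_argmin (fun y => phi y + (2 * alpha)^-1 * norm2 (y - x) ^+ 2) D z ->
  norm2 (z - x) <= alpha * norm2 h.
Proof.
move=> Dcvx phicvx alpha0 Dx hsub zmin.
have c0 : 0 <= (2 * alpha)^-1 by rewrite invr_ge0; lra.
have := prox_descent Dcvx phicvx c0 Dx zmin.
have -> : 2 * (2 * alpha)^-1 = alpha^-1 by rewrite invfM mulrA divff ?mul1r.
have := hsub z; rewrite norm2_sq => hle descent.
rewrite -[alpha]gtr0_norm // -norm2Z.
apply: norm2_le_of_dotv; rewrite dotvZl.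
have ialpha : 0 < alpha^-1 by rewrite invr_gt0.
rewrite -(ler_pM2l ialpha) mulrN mulrA mulVf ?gt_eqF // mul1r.
lra.
Qed.

End ProximalStep.

Theorem lemma12 (R : realType) (n : nat) (X : set 'rV[R]_n) (S : Type)
  (f : 'rV[R]_n -> S -> R) (fx : 'rV[R]_n -> S -> 'rV[R]_n -> R)
  (hXc : closed X) (hXcvx : convex_set X)
  (hfcvx : forall s, convex_fun_on setT (fun y => f y s))
  (hfsub : forall s, subdifferentiable_on (fun y => f y s) X)
  (hCi_cvx : forall x s, X x -> convex_fun_on setT (fx x s))
  (hCi_sub : forall x s, X x -> subdifferentiable_on (fx x s) X)
  (hCii_eq : forall x s, X x -> fx x s x = f x s)
  (hCii_le : forall x s, X x -> forall y, fx x s y <= f y s)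
  (xk xk1 : 'rV[R]_n) (Sk : S) (alpha : R)
  (hxk : X xk) (halpha : 0 < alpha)
  (hmin : is_argmin (fun y => fx xk Sk y + (2 * alpha)^-1 * (norm2 (y - xk)) ^+ 2) X xk1) :
  exists g, subgradient (fun y => f y Sk) xk g /\
    norm2 (xk - xk1) <= alpha * norm2 g.
Proof.
have [h hsub] := hCi_sub xk Sk hxk xk hxk.
exists h; split.
  exact: subgradient_minorant (hCii_eq _ _ hxk) (hCii_le _ _ hxk) hsub.
have phicvx := convex_fun_onS (subsetT X) (hCi_cvx xk Sk hxk).
rewrite -norm2N opprB.
exact: prox_step_le_subgradient hXcvx phicvx halpha hxk hsub hmin.
Qed.
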